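(* Let $n\ge 3$ and $m\ge 1$. Then $$A(n,m)=\big(A(n-1,m-1)\cdot (R_n\setminus\{e\})\big)\ \cup\ A(n-1,m),$$ and this union is disjoint. Here $A(n-1,m-1)\cdot(R_n\setminus\{e\})=\{uw\mid u\in A(n-1,m-1),\ w\in R_n\setminus\{e\}\}$.
   Context: For $k\ge 2$, $A_k$ is the alternating group on $\{1,\dots,k\}$, regarded as the subgroup of $A_n$ fixing $k+1,\dots,n$ for $k\le n$; products are compositions of permutations, rightmost factor applied first. $T(A_k)=\{(1\,2)(i\,j)\mid 1\le i<j\le k\}$, and for $v\in A_k$, $\ell_{T(A_k)}(v)=\min\{r\ge 0\mid v=t_1\cdots t_r,\ t_i\in T(A_k)\}$. $A(k,m)=\{v\in A_k\mid \ell_{T(A_k)}(v)=m\}$ (length computed within $A_k$). $R_n=\{(1\,2)(i\,n)\mid 1\le i<n\}\cup\{e\}$, $e$ the identity. *)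

From mathcomp Require Import all_boot fingroup perm.
Set Implicit Arguments. Unset Strict Implicit. Unset Printing Implicit Defensive.
Local Open Scope group_scope.

(* Points 1..N of the paper are the ordinals 0..N-1 of 'I_N.
   Paper composition: (u v)(x) = u (v x) (rightmost first).  MathComp's
   permutation product applies the LEFT factor first, so the paper's
   product u v is (v * u)%g. *)
Definition ppmul (N : nat) (u v : {perm 'I_N}) : {perm 'I_N} := v * u.

(* A_k inside S_N: even permutations fixing the points k+1..N
   (ordinals of value >= k). *)
Definition Alt_k (N k : nat) : {set {perm 'I_N}} :=
  [set s | ~~ odd_perm s & [forall x : 'I_N, (k <= x)%N ==> (s x == x)]].

(* T(A_k) = { (1 2)(i j) | 1 <= i < j <= k } *)
Definition Tgen (N k : nat) : {set {perm 'I_N}} :=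
  [set s | [exists a : 'I_N, exists b : 'I_N, exists i : 'I_N, exists j : 'I_N,
     [&& val a == 0%N, val b == 1%N, (i < j)%N, (j < k)%N &
         s == ppmul (tperm a b) (tperm i j)]]].

Fixpoint words (N k r : nat) : {set {perm 'I_N}} :=
  match r with
  | 0 => [set 1]
  | r'.+1 => [set ppmul t u | t in Tgen N k, u in words N k r']
  end.

(* A(k,m) = { v in A_k | l_{T(A_k)}(v) = m } *)
Definition Akm (N k m : nat) : {set {perm 'I_N}} :=
  [set v | [&& v \in Alt_k N k, v \in words N k m &
              [forall r : 'I_m, v \notin words N k r]]].

(* R_N = { (1 2)(i N) | 1 <= i < N } U {e} *)
Definition Rn (N : nat) : {set {perm 'I_N}} :=
  [set s | [exists a : 'I_N, exists b : 'I_N, exists i : 'I_N, exists j : 'I_N,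
     [&& val a == 0%N, val b == 1%N, val j == N.-1, (i < j)%N &
         s == ppmul (tperm a b) (tperm i j)]]] :|: [set 1].

From mathcomp Require Import all_boot fingroup perm zify.

(* Write c(s) for the number of cycles of s, fixed points included.  The
   T(A_k)-length of v is tlen v = n - 1 - min(c(v), c((1 2) v)); as c(v) and
   c((1 2) v) differ by one, this is (2n - 1 - c(v) - c((1 2) v)) / 2.
   Multiplying by a generator (1 2)(i j) changes each of the two cycle counts by
   at most one, so a product of r generators has tlen at most r.  Conversely, if
   an even v moves the largest point k, then v = (1 2)(i k) u with u fixing k
   and both cycle counts of u one larger, so induction on k writes v as a
   product of exactly tlen v generators.  Hence A(n, m) consists of the even v
   with tlen v = m; those fixing n form A(n-1, m), and the others are exactly
   the products u w with u in A(n-1, m-1) and w in R_n \ {e}. *)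

Set Implicit Arguments. Unset Strict Implicit. Unset Printing Implicit Defensive.
Local Open Scope group_scope.

Section CycleCount.
Variable T : finType.
Implicit Types (s : {perm T}) (x y z w : T).

Definition ncycles s := #|porbits s|.

Lemma ncycles_le s : ncycles s <= #|T|.
Proof. exact: leq_imset_card. Qed.

Lemma ncycles1 : ncycles 1 = #|T|.
Proof.
rewrite /ncycles /porbits card_imset // => x y /eqP.
by rewrite eq_porbit_mem porbit.unlock cycle1 imset_set1 /aperm perm1 inE => /eqP.
Qed.

Lemma ncycles_tpermC s x y : ncycles (s * tperm x y) = ncycles (tperm x y * s).
Proof.
have := porbits_mul_tperm s^-1 x y; rewrite porbitV porbitsV.
rewrite /ncycles -porbitsV invMg tpermV invgK -(porbits_mul_tperm s x y).
by move/addIn.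
Qed.

Lemma ncycles_tperm_conj s x y : ncycles (tperm x y * s * tperm x y) = ncycles s.
Proof. by rewrite ncycles_tpermC tpermKg. Qed.

Lemma ncycles_mul_tperm s x y : x != y ->
  ncycles (tperm x y * s) = (ncycles s).+1 \/ (ncycles (tperm x y * s)).+1 = ncycles s.
Proof.
move=> xy; have := porbits_mul_tperm s x y; rewrite /ncycles /= xy.
by case: (x \notin _) => /=; rewrite ?double0 ?doubleS => ?; lia.
Qed.

Lemma ncycles_mul_tperm_ge s x y : ncycles s <= (ncycles (tperm x y * s)).+1.
Proof.
have [<-|xy] := eqVneq x y; first by rewrite tperm1 mul1g leqnSn.
by case: (ncycles_mul_tperm s xy) => ?; lia.
Qed.

Lemma ncycles_mul_tperm_fixed s x z : s z = z -> x != z ->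
  (ncycles (tperm x z * s)).+1 = ncycles s.
Proof.
move=> sz xz; have := porbits_mul_tperm s x z; rewrite /ncycles /= xz.
have -> : x \notin porbit s z.
  by apply/porbitP => -[i xE]; move: xz; rewrite xE permX_fix ?eqxx.
by move=> /= ?; lia.
Qed.

Lemma tperm_mulC x y z w :
  tperm x y * tperm z w = tperm (tperm x y z) (tperm x y w) * tperm x y.
Proof. by rewrite -tpermJ /conjg tpermV -!mulgA tperm2 mulg1. Qed.

Lemma perm_on_pair s x y : perm_on [set x; y] s -> s = 1 \/ s = tperm x y.
Proof.
have fixed_x s' : perm_on [set x; y] s' -> s' x = x -> s' = 1.
  move=> s'on s'x; apply: (@perm_on_id _ _ [set y]); last by rewrite cards1.
  apply/subsetP => z; rewrite inE => s'z; have := subsetP s'on z s'z.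
  by rewrite !inE; case/orP => // /eqP zx; move: s'z; rewrite zx inE s'x eqxx.
move=> son; have [sx|sx] := eqVneq (s x) x; first by left; apply: fixed_x.
right; have : s x \in [set x; y] by rewrite (perm_closed _ son) !inE eqxx.
rewrite !inE (negPf sx) /= => /eqP sxy.
have st : s * tperm x y = 1.
  by apply: fixed_x; [rewrite perm_onM ?tperm_on | rewrite permM sxy tpermR].
by rewrite -[s]mulg1 -[1](tperm2 x y) mulgA st mul1g.
Qed.

End CycleCount.

Section TLength.
Variables (N : nat) (a b : 'I_N).
Hypotheses (a0 : val a = 0%N) (b1 : val b = 1%N).
Local Notation t12 := (tperm a b).
Implicit Types (s u v w : {perm 'I_N}) (x y z : 'I_N).

(* Cycle counts of one permutation may carry different (convertible) finType
   instances for ['I_N], which [lia] treats as distinct atoms; abstract them first. *)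
Ltac ncycles_lia :=
  repeat match goal with H : context [ncycles _] |- _ => revert H end;
  repeat match goal with |- context [ncycles ?s] =>
    let c := fresh "c" in move: (ncycles s) => c end;
  intros; lia.

Lemma neq_ab : a != b.
Proof. by rewrite -val_eqE a0 b1. Qed.

Lemma t12_ge2 z : (1 < z)%N -> t12 z = z.
Proof. by move=> z_gt1; rewrite tpermD // -val_eqE ?a0 ?b1 /=; lia. Qed.

Definition tlen s := N.-1 - minn (ncycles s) (ncycles (t12 * s)).

Lemma tlenE s : tlen s + minn (ncycles s) (ncycles (t12 * s)) = N.-1.
Proof.
have := ncycles_le s; have := ncycles_le (t12 * s); rewrite card_ord /tlen.
by case: (ncycles_mul_tperm s neq_ab); ncycles_lia.
Qed.

Lemma tlen1 : tlen 1 = 0%N.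
Proof.
have := ncycles_mul_tperm_fixed (perm1 b) neq_ab.
by rewrite /tlen mulg1 ncycles1 card_ord; ncycles_lia.
Qed.

Lemma tlen_mul_gen_le u x y : tlen (u * (tperm x y * t12)) <= (tlen u).+1.
Proof.
rewrite /tlen.
have -> : t12 * (u * (tperm x y * t12)) = t12 * (u * tperm x y) * t12 by rewrite !mulgA.
rewrite ncycles_tperm_conj ncycles_tpermC.
have -> : tperm x y * t12 = t12 * tperm (t12 x) (t12 y) by rewrite [RHS]tperm_mulC !tpermK.
rewrite mulgA ncycles_tpermC.
have := ncycles_mul_tperm_ge (u * t12) (t12 x) (t12 y).
have := ncycles_mul_tperm_ge u x y.
rewrite ncycles_tpermC; ncycles_lia.
Qed.

Lemma tlen_mul_gen_fixed u x z : u z = z -> x != z -> (1 < z)%N ->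
  tlen (u * (tperm x z * t12)) = (tlen u).+1.
Proof.
move=> uz xz /t12_ge2 t12z; have := tlenE u; rewrite /tlen.
have -> : t12 * (u * (tperm x z * t12)) = t12 * (u * tperm x z) * t12 by rewrite !mulgA.
rewrite ncycles_tperm_conj ncycles_tpermC.
have -> : tperm x z * t12 = t12 * tperm (t12 x) z by rewrite [RHS]tperm_mulC tpermK t12z.
rewrite mulgA ncycles_tpermC.
have := ncycles_mul_tperm_fixed uz xz.
have : (ncycles (tperm (t12 x) z * (u * t12))).+1 = ncycles (u * t12).
  apply: ncycles_mul_tperm_fixed; first by rewrite permM uz.
  by rewrite -[z in _ != z]t12z (inj_eq perm_inj).
rewrite ncycles_tpermC; ncycles_lia.
Qed.

Lemma tlen_gen_mul_fixed u x z : u z = z -> x != z -> (1 < z)%N ->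
  tlen (tperm x z * t12 * u) = (tlen u).+1.
Proof.
move=> uz xz /t12_ge2 t12z; have := tlenE u; rewrite /tlen.
have -> : t12 * (tperm x z * t12 * u) = tperm (t12 x) z * u.
  by rewrite !mulgA tperm_mulC t12z -(mulgA _ t12 t12) tperm2 mulg1.
rewrite -mulgA.
have : (ncycles (tperm x z * (t12 * u))).+1 = ncycles (t12 * u).
  by apply: ncycles_mul_tperm_fixed; rewrite ?permM ?t12z.
have : (ncycles (tperm (t12 x) z * u)).+1 = ncycles u.
  by apply: ncycles_mul_tperm_fixed; rewrite // -[z in _ != z]t12z (inj_eq perm_inj).
ncycles_lia.
Qed.

Lemma Alt_kP k v :
  reflect (~~ odd_perm v /\ forall x, (k <= x)%N -> v x = x) (v \in Alt_k N k).
Proof.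
rewrite inE; apply: (iffP andP) => -[ev vfix]; split=> //.
  by move=> x kx; apply/eqP; exact: (implyP (forallP vfix x)).
by apply/forallP => x; apply/implyP => /vfix ->.
Qed.

Lemma Alt_kS k z v : val z = k ->
  (v \in Alt_k N k) = (v \in Alt_k N k.+1) && (v z == z).
Proof.
move=> zk; apply/Alt_kP/andP => [[ev vfix] | [/Alt_kP[ev vfix] /eqP vz]].
  by split; [apply/Alt_kP; split=> // x kx; apply: vfix; lia | rewrite vfix ?zk].
split=> // x; rewrite leq_eqVlt => /orP[/eqP kx | /vfix //].
by have -> : x = z by apply: val_inj; rewrite zk.
Qed.

Lemma Alt_k_full v : (v \in Alt_k N N) = ~~ odd_perm v.
Proof.
apply/Alt_kP/idP => [[] // | ev]; split=> // x.
by rewrite leqNgt ltn_ord.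
Qed.

Lemma Alt_k2_eq1 v : v \in Alt_k N 2 -> v = 1.
Proof.
case/Alt_kP => ev vfix.
have von : perm_on [set a; b] v.
  apply/subsetP => x; rewrite inE !inE -!val_eqE a0 b1 /=.
  by apply: contraR => x_ge2; rewrite vfix ?eqxx //; lia.
case: (perm_on_pair von) => // vE.
by move: ev; rewrite vE odd_tperm neq_ab.
Qed.

Lemma mem_Tgen k t : reflect
  (exists i j : 'I_N, [/\ (i < j)%N, (j < k)%N & t = tperm i j * t12]) (t \in Tgen N k).
Proof.
rewrite inE; apply: (iffP idP) => [|[i [j [ij jk ->]]]].
  case/existsP=> a' /existsP[b' /existsP[i /existsP[j /and5P[/eqP a'0 /eqP b'1 ij jk /eqP ->]]]].
  have -> : a' = a by apply: val_inj; rewrite a'0 a0.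
  have -> : b' = b by apply: val_inj; rewrite b'1 b1.
  by exists i, j.
apply/existsP; exists a; apply/existsP; exists b; apply/existsP; exists i; apply/existsP; exists j.
by rewrite a0 b1 ij jk /ppmul !eqxx.
Qed.

Lemma words_subset k k' r : (k <= k')%N -> words N k r \subset words N k' r.
Proof.
move=> kk'; elim: r => [|r IH] //=.
apply/subsetP => _ /imset2P[t u /mem_Tgen[i [j [ij jk ->]]] /(subsetP IH) u_w ->].
apply: imset2_f u_w; apply/mem_Tgen; exists i, j; split=> //; exact: leq_trans kk'.
Qed.

Lemma tlen_words k r v : v \in words N k r -> (tlen v <= r)%N.
Proof.
elim: r v => [|r IH] v /=; first by rewrite inE => /eqP ->; rewrite tlen1.
case/imset2P=> _ u /mem_Tgen[i [j [_ _ ->]]] /IH u_le ->.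
exact: leq_trans (tlen_mul_gen_le u i j) _.
Qed.

Lemma Alt_k_peel (K : 'I_N) v : (1 < K)%N -> v \in Alt_k N K.+1 -> v K != K ->
  exists (i : 'I_N) u, [/\ (i < K)%N, u \in Alt_k N K & v = u * (tperm i K * t12)].
Proof.
move=> K_gt1 /Alt_kP[ev vfix] vK.
have vK_lt : (v K < K)%N.
  have : (v K <= K)%N.
    by rewrite leqNgt; apply/negP => /vfix /perm_inj vKK; rewrite vKK eqxx in vK.
  by move: vK; rewrite -val_eqE /=; lia.
pose i := t12 (v K); pose w := tperm i K * t12.
have i_lt : (i < K)%N by rewrite /i; case: tpermP => [_|_|_ _]; rewrite ?a0 ?b1 //; lia.
have wK : w K = v K by rewrite permM tpermR /i tpermK.
exists i, (v * w^-1); split=> //; last by rewrite mulgKV.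
apply/Alt_kP; split.
  have iK : i != K by rewrite -val_eqE /=; lia.
  by rewrite odd_permM odd_permV odd_permM !odd_tperm iK neq_ab (negPf ev).
move=> x; rewrite leq_eqVlt => /orP[/eqP Kx | Kx].
  have -> : x = K by apply: val_inj.
  by rewrite permM -wK permK.
have wx : w x = x by rewrite permM !tpermD // -val_eqE ?a0 ?b1 /=; lia.
by rewrite permM vfix // -{1}wx permK.
Qed.

Lemma words_tlen k v : (1 < k <= N)%N -> v \in Alt_k N k -> v \in words N k (tlen v).
Proof.
elim: k v => // k IH v /andP[k_gt1 k_le] vA.
have [k_le1 | k_gt1'] := leqP k 1.
  have k1 : k = 1%N by lia.
  by rewrite k1 in vA; rewrite (Alt_k2_eq1 vA) tlen1 /= inE.
have IHk u : u \in Alt_k N k -> u \in words N k.+1 (tlen u).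
  move=> uA; apply: (subsetP (words_subset _ (leqnSn k))).
  by apply: IH uA; rewrite k_gt1' ltnW.
pose K : 'I_N := Ordinal k_le.
have [vK | vK] := eqVneq (v K) K.
  by apply: IHk; rewrite (@Alt_kS k K v) ?vA ?vK ?eqxx.
have [i [u [iK uA ->]]] := @Alt_k_peel K v k_gt1' vA vK.
have uK : u K = K by case/Alt_kP: uA => _ -> .
have iK' : i != K by move: iK; rewrite -val_eqE /=; lia.
rewrite tlen_mul_gen_fixed //.
apply/imset2P; exists (tperm i K * t12) u => //; last exact: IHk.
by apply/mem_Tgen; exists i, K.
Qed.

Lemma Akm_tlen k m v : (1 < k <= N)%N ->
  (v \in Akm N k m) = (v \in Alt_k N k) && (tlen v == m).
Proof.
move=> k_ok; rewrite inE; apply/and3P/andP => [[vA vw /forallP vmin] | [vA /eqP <-]].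
  split=> //; rewrite eqn_leq (tlen_words vw) /= leqNgt; apply/negP => lt_m.
  by have := vmin (Ordinal lt_m); rewrite words_tlen.
split; [done | exact: words_tlen | apply/forallP => r].
by apply/negP => /tlen_words; have := ltn_ord r; lia.
Qed.

Section LastPoint.
Variable L : 'I_N.
Hypotheses (L_last : val L = N.-1) (L_gt1 : (1 < L)%N).

Lemma Alt_k_last v : (v \in Alt_k N N.-1) = ~~ odd_perm v && (v L == L).
Proof.
by rewrite (Alt_kS _ L_last) prednK ?Alt_k_full //; have := ltn_ord L; lia.
Qed.

Lemma Rn_nontrivP w :
  reflect (exists2 i : 'I_N, i != L & w = tperm i L * t12) (w \in Rn N :\ 1).
Proof.
rewrite !inE; apply: (iffP andP) => [[w1 /orP[|/eqP w1']] | [i iL ->]].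
- case/existsP=> a' /existsP[b' /existsP[i /existsP[j /and5P[/eqP a'0 /eqP b'1 /eqP jN ij /eqP ->]]]].
  have -> : a' = a by apply: val_inj; rewrite a'0 a0.
  have -> : b' = b by apply: val_inj; rewrite b'1 b1.
  have jL : j = L by apply: val_inj; rewrite jN L_last.
  by subst j; exists i => //; move: ij; rewrite -val_eqE /=; lia.
- by rewrite w1' eqxx in w1.
have iL_lt : (i < L)%N.
  by move: iL; rewrite -val_eqE /=; have := ltn_ord i; have := L_last; rewrite /=; lia.
split.
  apply/eqP => /(congr1 (fun s => s i)); rewrite permM tpermL perm1 t12_ge2 // => Li.
  by rewrite Li eqxx in iL.
apply/orP; left; apply/existsP; exists a; apply/existsP; exists b.
apply/existsP; exists i; apply/existsP; exists L.
by rewrite a0 b1 L_last iL_lt /ppmul !eqxx.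
Qed.

Lemma mem_Akm_mul_Rn m v : (0 < m)%N ->
  (v \in [set ppmul u w | u : {perm 'I_N} in Akm N N.-1 m.-1, w : {perm 'I_N} in Rn N :\ 1]) =
  [&& ~~ odd_perm v, v L != L & tlen v == m].
Proof.
move=> m_gt0; have k_ok : (1 < N.-1 <= N)%N by rewrite -L_last L_gt1 (ltnW (ltn_ord L)).
apply/imset2P/and3P => [[u w] | [ev vL /eqP tv]].
  rewrite Akm_tlen // Alt_k_last => /andP[/andP[ev /eqP uL] /eqP tu] /Rn_nontrivP[i iL ->] ->.
  rewrite /ppmul; split.
  - by rewrite !odd_permM !odd_tperm iL neq_ab (negPf ev).
  - apply: contra iL; rewrite permM permM tpermR -{1}uL => /eqP /perm_inj t12i.
    by rewrite -(tpermK a b i) t12i t12_ge2.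
  - by rewrite tlen_gen_mul_fixed // tu prednK.
pose i := v^-1 L; pose w := tperm i L * t12.
have iL : i != L by apply: contra vL => /eqP iL; rewrite -{1}iL /i permKV.
have wi : w i = L by rewrite permM tpermL t12_ge2.
have uL : (w^-1 * v) L = L by rewrite permM -wi permK permKV.
exists (w^-1 * v) w; last by rewrite /ppmul mulKVg.
  rewrite Akm_tlen // Alt_k_last uL eqxx andbT.
  rewrite !odd_permM odd_permV !odd_permM !odd_tperm iL neq_ab (negPf ev) /=.
  by rewrite -tv -[in tlen v](mulKVg w v) tlen_gen_mul_fixed.
by apply/Rn_nontrivP; exists i.
Qed.

End LastPoint.
End TLength.

Theorem theorem5p3 (n m : nat) :
  (3 <= n)%N -> (1 <= m)%N ->
  Akm n n m =
    [set ppmul u w | u : {perm 'I_n} in Akm n n.-1 m.-1, w : {perm 'I_n} in Rn n :\ 1%g] :|: Akm n n.-1 m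
  /\ [disjoint [set ppmul u w | u : {perm 'I_n} in Akm n n.-1 m.-1, w : {perm 'I_n} in Rn n :\ 1%g]
       & Akm n n.-1 m].
Proof.
move=> n_ge3 m_gt0.
have n_gt1 : (1 < n)%N by lia.
have L_lt : (n.-1 < n)%N by lia.
pose a : 'I_n := Ordinal (ltnW n_gt1); pose b : 'I_n := Ordinal n_gt1.
pose L : 'I_n := Ordinal L_lt.
have [a0 b1 L_last] : [/\ val a = 0%N, val b = 1%N & val L = n.-1] by [].
have L_gt1 : (1 < L)%N by rewrite /=; lia.
have Akm_n v : (v \in Akm n n m) = ~~ odd_perm v && (tlen a b v == m).
  by rewrite (Akm_tlen a0 b1) ?Alt_k_full // n_gt1 /=.
have Akm_n1 v : (v \in Akm n n.-1 m) = [&& ~~ odd_perm v, v L == L & tlen a b v == m].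
  by rewrite (Akm_tlen a0 b1) ?(Alt_k_last a0 b1 L_last) ?andbA //; lia.
have mem_prod v := mem_Akm_mul_Rn a0 b1 L_last L_gt1 v m_gt0.
split.
  apply/setP => v; rewrite in_setU mem_prod Akm_n Akm_n1.
  by case: (odd_perm v); case: (v L == L); case: (tlen a b v == m).
apply/pred0P => v /=; rewrite mem_prod Akm_n1.
by case: (v L == L); rewrite !andbF.
Qed.
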